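(* Let a hyperbolic triangle have $e^a,e^b,e^c\in\mathbb{Q}$. Then $\cos\alpha,\cos\beta,\cos\gamma\in\mathbb{Q}$, and there is $r\in\mathbb{Q}$ with $\sin(A)=r\,\Delta_2$, where $\Delta_2=\sin(\alpha)\sinh(b)\sinh(c)=\sin(\beta)\sinh(a)\sinh(c)=\sin(\gamma)\sinh(a)\sinh(b)$. Moreover the following are equivalent: (i) $\Delta_2\in\mathbb{Q}$; (ii) $\sin\alpha,\sin\beta,\sin\gamma\in\mathbb{Q}$; (iii) $\sin A\in\mathbb{Q}$ (and then the triangle is a hyperbolic Heron triangle).
   Context: All triangles are non-degenerate, bounded triangles in the hyperbolic plane (curvature $-1$), with side lengths $a,b,c>0$, opposite angles $\alpha,\beta,\gamma>0$, and area $A=\pi-\alpha-\beta-\gamma$. A hyperbolic Heron triangle is one with $e^a,e^b,e^c\in\mathbb{Q}$ and $\cos,\sin$ of $\alpha,\beta,\gamma,A$ all rational. *)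

From Stdlib Require Import Reals QArith Qreals.
Open Scope R_scope.

Definition is_rat (x : R) : Prop := exists q : Q, x = Q2R q.

(* A non-degenerate bounded triangle in the hyperbolic plane (curvature -1),
   given (up to isometry) by its side lengths a b c and the opposite angles.
   Such a triangle exists iff a,b,c > 0 satisfy the strict triangle
   inequalities, and its angles are the angles in (0,pi) given by the
   hyperbolic law of cosines. *)
Record hyp_triangle : Type := HypTriangle {
  ht_a : R; ht_b : R; ht_c : R;
  ht_alpha : R; ht_beta : R; ht_gamma : R;
  ht_a_pos : 0 < ht_a; ht_b_pos : 0 < ht_b; ht_c_pos : 0 < ht_c;
  ht_tri_a : ht_a < ht_b + ht_c;
  ht_tri_b : ht_b < ht_a + ht_c;
  ht_tri_c : ht_c < ht_a + ht_b;
  ht_alpha_range : 0 < ht_alpha < PI;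
  ht_beta_range : 0 < ht_beta < PI;
  ht_gamma_range : 0 < ht_gamma < PI;
  ht_cos_alpha : cos ht_alpha =
    (cosh ht_b * cosh ht_c - cosh ht_a) / (sinh ht_b * sinh ht_c);
  ht_cos_beta : cos ht_beta =
    (cosh ht_a * cosh ht_c - cosh ht_b) / (sinh ht_a * sinh ht_c);
  ht_cos_gamma : cos ht_gamma =
    (cosh ht_a * cosh ht_b - cosh ht_c) / (sinh ht_a * sinh ht_b)
}.

Definition ht_area (T : hyp_triangle) : R :=
  PI - ht_alpha T - ht_beta T - ht_gamma T.

Definition Delta2 (T : hyp_triangle) : R :=
  sin (ht_alpha T) * sinh (ht_b T) * sinh (ht_c T).

Definition hyp_heron (T : hyp_triangle) : Prop :=
  is_rat (exp (ht_a T)) /\ is_rat (exp (ht_b T)) /\ is_rat (exp (ht_c T)) /\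
  is_rat (cos (ht_alpha T)) /\ is_rat (sin (ht_alpha T)) /\
  is_rat (cos (ht_beta T)) /\ is_rat (sin (ht_beta T)) /\
  is_rat (cos (ht_gamma T)) /\ is_rat (sin (ht_gamma T)) /\
  is_rat (cos (ht_area T)) /\ is_rat (sin (ht_area T)).

From Stdlib Require Import Reals QArith Qreals Lra.
Open Scope R_scope.

(* Write A, B, C for cosh a, cosh b, cosh c and sa, sb, sc for sinh a, sinh b,
   sinh c.  If e^t is rational then so are cosh t and sinh t, so the law of
   cosines  cos alpha = (B C - A) / (sb sc)  makes every cosine rational.
   Squaring gives  (sin alpha sb sc)^2 = (sb sc)^2 - (B C - A)^2 = G  with the
   symmetric "Gram determinant"  G = 1 - A^2 - B^2 - C^2 + 2 A B C;  as the
   three products  sin(angle) * (sinh of the adjacent sides)  are positive and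
   have the same square G, they coincide: this is Delta2.  Hence
   sin alpha = Delta2 / (sb sc), etc., i.e. each sine is a nonzero rational
   multiple of Delta2.  Since the area is  pi - (alpha + beta + gamma),
   expanding sin and cos of a triple sum and using Delta2^2 = G gives
     sin(area) = r * Delta2,   r = (1 + A + B + C) / ((1 + A)(1 + B)(1 + C)),
   a positive rational, and expresses cos(area) as a rational function of
   A, B, C.
   The equivalences follow since multiplying by a nonzero rational preserves
   rationality in both directions. *)

Lemma rat_IZR (z : Z) : is_rat (IZR z).
Proof. exists (inject_Z z). unfold Q2R; simpl. field. Qed.

Lemma rat_plus (x y : R) : is_rat x -> is_rat y -> is_rat (x + y).
Proof. intros [p ->] [q ->]. exists (p + q)%Q. now rewrite Q2R_plus. Qed.

Lemma rat_minus (x y : R) : is_rat x -> is_rat y -> is_rat (x - y).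
Proof. intros [p ->] [q ->]. exists (p - q)%Q. now rewrite Q2R_minus. Qed.

Lemma rat_opp (x : R) : is_rat x -> is_rat (- x).
Proof. intros [p ->]. exists (- p)%Q. now rewrite Q2R_opp. Qed.

Lemma rat_mult (x y : R) : is_rat x -> is_rat y -> is_rat (x * y).
Proof. intros [p ->] [q ->]. exists (p * q)%Q. now rewrite Q2R_mult. Qed.

Lemma rat_inv (x : R) : is_rat x -> x <> 0 -> is_rat (/ x).
Proof.
  intros [p ->] Hnz. destruct (Qeq_dec p 0) as [Hp | Hp].
  - exfalso; apply Hnz. rewrite (Qeq_eqR _ _ Hp). unfold Q2R; simpl; field.
  - exists (/ p)%Q. now rewrite Q2R_inv.
Qed.

Lemma rat_div (x y : R) : is_rat x -> is_rat y -> y <> 0 -> is_rat (x / y).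
Proof. intros Hx Hy Hnz. apply rat_mult; [exact Hx | now apply rat_inv]. Qed.

Ltac rat_closure :=
  repeat first [ assumption | apply rat_IZR | apply rat_plus | apply rat_minus
               | apply rat_opp | apply rat_mult | apply rat_div | apply rat_inv ].

Lemma rat_scale_iff (k x : R) : is_rat k -> k <> 0 -> (is_rat (k * x) <-> is_rat x).
Proof.
  intros Hk Hnz. split; intro H.
  - replace x with (k * x / k) by (field; exact Hnz). now apply rat_div.
  - now apply rat_mult.
Qed.

Lemma rat_div_iff (x y : R) : is_rat y -> y <> 0 -> (is_rat (x / y) <-> is_rat x).
Proof.
  intros Hy Hnz. unfold Rdiv. rewrite Rmult_comm.
  apply rat_scale_iff; [now apply rat_inv | now apply Rinv_neq_0_compat].
Qed.

Lemma cosh_pos (t : R) : 0 < cosh t.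
Proof.
  unfold cosh. pose proof (exp_pos t). pose proof (exp_pos (- t)). lra.
Qed.

Lemma sinh_pos (t : R) : 0 < t -> 0 < sinh t.
Proof. intro Ht. rewrite <- sinh_0. now apply sinh_lt. Qed.

Lemma sinh_sq (t : R) : sinh t * sinh t = cosh t * cosh t - 1.
Proof.
  unfold sinh, cosh. rewrite exp_Ropp. pose proof (exp_pos t).
  field. lra.
Qed.

Lemma rat_cosh_sinh (t : R) : is_rat (exp t) -> is_rat (cosh t) /\ is_rat (sinh t).
Proof.
  intro He. pose proof (exp_pos t).
  unfold cosh, sinh. rewrite exp_Ropp.
  split; rat_closure; intro; lra.
Qed.

(* The Gram determinant of the three unit vectors spanning a hyperbolic
   triangle in the hyperboloid model, in terms of A = cosh a, B, C; it is
   symmetric in A, B, C and equals Delta2^2. *)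
Definition gram (A B C : R) : R := 1 - A*A - B*B - C*C + 2*A*B*C.

Lemma gram_bca (A B C : R) : gram B C A = gram A B C.
Proof. unfold gram. ring. Qed.

Lemma gram_acb (A B C : R) : gram A C B = gram A B C.
Proof. unfold gram. ring. Qed.

Lemma law_of_cosines_sq (t X Y Z x y : R) :
  x * x = X * X - 1 -> y * y = Y * Y - 1 -> x <> 0 -> y <> 0 ->
  cos t = (X * Y - Z) / (x * y) ->
  (sin t * x * y) * (sin t * x * y) = gram X Y Z.
Proof.
  intros Hx Hy Hx0 Hy0 Hcos.
  assert (Hcxy : cos t * (x * y) = X * Y - Z) by (rewrite Hcos; field; auto).
  pose proof (sin2_cos2 t) as Hpyth. unfold Rsqr in Hpyth.
  transitivity ((x * x) * (y * y) - (cos t * (x * y)) * (cos t * (x * y))).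
  { transitivity ((sin t * sin t) * (x * x) * (y * y)); [ring |].
    replace (sin t * sin t) with (1 - cos t * cos t) by lra. ring. }
  rewrite Hcxy, Hx, Hy. unfold gram. ring.
Qed.

Lemma sin_prod_pos (t x y : R) : 0 < t < PI -> 0 < x -> 0 < y -> 0 < sin t * x * y.
Proof.
  intros [Ht0 HtPI] Hx Hy. pose proof (sin_gt_0 t Ht0 HtPI).
  apply Rmult_lt_0_compat; [apply Rmult_lt_0_compat |]; assumption.
Qed.

Lemma pos_sq_unique (x y : R) : 0 < x -> 0 < y -> x * x = y * y -> x = y.
Proof. intros Hx Hy Hsq. apply Rsqr_inj; unfold Rsqr; lra. Qed.

Lemma factors_nonzero (s X : R) :
  s * s = X * X - 1 -> s <> 0 -> X * X - 1 <> 0 /\ 1 + X <> 0.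
Proof.
  intros Hs Hnz. assert (Hpos : 0 < s * s) by (apply Rsqr_pos_lt; exact Hnz).
  split; intro; nra.
Qed.

Lemma sin_sum3 (x y z : R) :
  sin (x + y + z) = sin x * cos y * cos z + cos x * sin y * cos z
                    + cos x * cos y * sin z - sin x * sin y * sin z.
Proof. repeat rewrite ?sin_plus, ?cos_plus. ring. Qed.

Lemma cos_sum3 (x y z : R) :
  cos (x + y + z) = cos x * cos y * cos z - cos x * sin y * sin z
                    - sin x * cos y * sin z - sin x * sin y * cos z.
Proof. repeat rewrite ?sin_plus, ?cos_plus. ring. Qed.

(* The ratio sin(area) / Delta2 and the cosine of the angle sum, as rational
   functions of A = cosh a, B = cosh b, C = cosh c. *)
Definition area_ratio (A B C : R) : R :=
  (1 + A + B + C) / ((1 + A) * (1 + B) * (1 + C)).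

Definition angle_sum_cos (A B C : R) : R :=
  ((B*C - A) * (A*C - B) * (A*B - C)
   - gram A B C * ((B*C - A) + (A*C - B) + (A*B - C)))
  / ((A*A - 1) * (B*B - 1) * (C*C - 1)).

(* Sine and cosine of alpha + beta + gamma once every sine is written as
   D / (product of the adjacent sinh) and every cosine by the law of cosines,
   with D^2 the Gram determinant. *)
Section AngleSum.
Variables A B C sa sb sc D : R.
Hypotheses (Hsa : sa * sa = A * A - 1) (Hsb : sb * sb = B * B - 1)
           (Hsc : sc * sc = C * C - 1).
Hypotheses (Hsa0 : sa <> 0) (Hsb0 : sb <> 0) (Hsc0 : sc <> 0).
Hypothesis HD : D * D = gram A B C.

Lemma sin_angle_sum_identity :
  D / (sb*sc) * ((A*C - B) / (sa*sc)) * ((A*B - C) / (sa*sb))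
  + (B*C - A) / (sb*sc) * (D / (sa*sc)) * ((A*B - C) / (sa*sb))
  + (B*C - A) / (sb*sc) * ((A*C - B) / (sa*sc)) * (D / (sa*sb))
  - D / (sb*sc) * (D / (sa*sc)) * (D / (sa*sb))
  = area_ratio A B C * D.
Proof.
  destruct (factors_nonzero sa A Hsa Hsa0), (factors_nonzero sb B Hsb Hsb0),
    (factors_nonzero sc C Hsc Hsc0).
  transitivity (D * ((A*C - B) * (A*B - C) + (B*C - A) * (A*B - C)
                     + (B*C - A) * (A*C - B) - D * D)
                / ((sa*sa) * (sb*sb) * (sc*sc))).
  { field. auto. }
  rewrite HD, Hsa, Hsb, Hsc. unfold area_ratio, gram. field. tauto.
Qed.

Lemma cos_angle_sum_identity :
  (B*C - A) / (sb*sc) * ((A*C - B) / (sa*sc)) * ((A*B - C) / (sa*sb))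
  - (B*C - A) / (sb*sc) * (D / (sa*sc)) * (D / (sa*sb))
  - D / (sb*sc) * ((A*C - B) / (sa*sc)) * (D / (sa*sb))
  - D / (sb*sc) * (D / (sa*sc)) * ((A*B - C) / (sa*sb))
  = angle_sum_cos A B C.
Proof.
  unfold angle_sum_cos. rewrite <- HD, <- Hsa, <- Hsb, <- Hsc. field. auto.
Qed.

End AngleSum.

Section Triangle.
Variable T : hyp_triangle.
Local Notation A := (cosh (ht_a T)).
Local Notation B := (cosh (ht_b T)).
Local Notation C := (cosh (ht_c T)).
Local Notation sa := (sinh (ht_a T)).
Local Notation sb := (sinh (ht_b T)).
Local Notation sc := (sinh (ht_c T)).

Lemma sinh_sides_pos : 0 < sa /\ 0 < sb /\ 0 < sc.
Proof. repeat split; apply sinh_pos; apply T. Qed.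

Lemma Delta2_pos : 0 < Delta2 T.
Proof.
  destruct sinh_sides_pos as (Ha & Hb & Hc).
  apply sin_prod_pos; [apply T | assumption | assumption].
Qed.

(* Delta2^2 is the Gram determinant (squared law of cosines at alpha); the
   analogous products at beta and gamma are positive with the same square,
   hence equal to Delta2. *)
Lemma Delta2_sq : Delta2 T * Delta2 T = gram A B C.
Proof.
  destruct sinh_sides_pos as (Ha & Hb & Hc). unfold Delta2.
  rewrite <- gram_bca.
  apply law_of_cosines_sq; try apply sinh_sq; try lra. apply ht_cos_alpha.
Qed.

Lemma Delta2_beta : Delta2 T = sin (ht_beta T) * sa * sc.
Proof.
  destruct sinh_sides_pos as (Ha & Hb & Hc).
  apply pos_sq_unique;
    [apply Delta2_pos | apply sin_prod_pos; [apply T | assumption | assumption] |].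
  rewrite Delta2_sq, <- gram_acb.
  symmetry. apply law_of_cosines_sq; try apply sinh_sq; try lra. apply ht_cos_beta.
Qed.

Lemma Delta2_gamma : Delta2 T = sin (ht_gamma T) * sa * sb.
Proof.
  destruct sinh_sides_pos as (Ha & Hb & Hc).
  apply pos_sq_unique;
    [apply Delta2_pos | apply sin_prod_pos; [apply T | assumption | assumption] |].
  rewrite Delta2_sq.
  symmetry. apply law_of_cosines_sq; try apply sinh_sq; try lra. apply ht_cos_gamma.
Qed.

Lemma sin_angles_eq :
  sin (ht_alpha T) = Delta2 T / (sb * sc) /\
  sin (ht_beta T) = Delta2 T / (sa * sc) /\
  sin (ht_gamma T) = Delta2 T / (sa * sb).
Proof.
  destruct sinh_sides_pos as (Ha & Hb & Hc).
  repeat split; [unfold Delta2 | rewrite Delta2_beta | rewrite Delta2_gamma];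
    field; split; lra.
Qed.

(* The area is pi minus the angle sum, so its sine and cosine are those of
   the angle sum (the latter up to sign). *)
Lemma sin_area_eq : sin (ht_area T) = area_ratio A B C * Delta2 T.
Proof.
  destruct sinh_sides_pos as (Ha & Hb & Hc).
  unfold ht_area.
  replace (PI - ht_alpha T - ht_beta T - ht_gamma T)
    with (PI - (ht_alpha T + ht_beta T + ht_gamma T)) by ring.
  rewrite sin_PI_x, sin_sum3.
  destruct sin_angles_eq as (-> & -> & ->).
  rewrite ht_cos_alpha, ht_cos_beta, ht_cos_gamma.
  apply sin_angle_sum_identity; try apply sinh_sq; try lra. apply Delta2_sq.
Qed.

Lemma cos_area_eq : cos (ht_area T) = - angle_sum_cos A B C.
Proof.
  destruct sinh_sides_pos as (Ha & Hb & Hc).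
  unfold ht_area.
  replace (PI - ht_alpha T - ht_beta T - ht_gamma T)
    with (PI - (ht_alpha T + ht_beta T + ht_gamma T)) by ring.
  rewrite Rtrigo_facts.cos_pi_minus, cos_sum3.
  destruct sin_angles_eq as (-> & -> & ->).
  rewrite ht_cos_alpha, ht_cos_beta, ht_cos_gamma.
  f_equal. apply cos_angle_sum_identity; try apply sinh_sq; try lra. apply Delta2_sq.
Qed.

Lemma area_ratio_pos : 0 < area_ratio A B C.
Proof.
  pose proof (cosh_pos (ht_a T)). pose proof (cosh_pos (ht_b T)).
  pose proof (cosh_pos (ht_c T)).
  unfold area_ratio. apply Rdiv_lt_0_compat; [lra |].
  repeat apply Rmult_lt_0_compat; lra.
Qed.

End Triangle.

Section RationalTriangle.
Variable T : hyp_triangle.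
Hypotheses (Ea : is_rat (exp (ht_a T))) (Eb : is_rat (exp (ht_b T)))
           (Ec : is_rat (exp (ht_c T))).
Local Notation A := (cosh (ht_a T)).
Local Notation B := (cosh (ht_b T)).
Local Notation C := (cosh (ht_c T)).
Local Notation sa := (sinh (ht_a T)).
Local Notation sb := (sinh (ht_b T)).
Local Notation sc := (sinh (ht_c T)).

Lemma rat_hyperbolic_sides :
  is_rat A /\ is_rat B /\ is_rat C /\ is_rat sa /\ is_rat sb /\ is_rat sc.
Proof.
  destruct (rat_cosh_sinh _ Ea), (rat_cosh_sinh _ Eb), (rat_cosh_sinh _ Ec).
  tauto.
Qed.

Ltac pos_product :=
  apply Rgt_not_eq; repeat (apply Rmult_lt_0_compat; try assumption).

Lemma rat_cosines :
  is_rat (cos (ht_alpha T)) /\ is_rat (cos (ht_beta T)) /\ is_rat (cos (ht_gamma T)).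
Proof.
  destruct rat_hyperbolic_sides as (RA & RB & RC & Rsa & Rsb & Rsc).
  destruct (sinh_sides_pos T) as (Ha & Hb & Hc).
  rewrite ht_cos_alpha, ht_cos_beta, ht_cos_gamma.
  repeat split; rat_closure; pos_product.
Qed.

Lemma rat_area_ratio : is_rat (area_ratio A B C).
Proof.
  destruct rat_hyperbolic_sides as (RA & RB & RC & _).
  pose proof (area_ratio_pos T) as Hr. unfold area_ratio in *.
  rat_closure. intro Hden. rewrite Hden, Rdiv_0_r in Hr. lra.
Qed.

Lemma rat_cos_area : is_rat (cos (ht_area T)).
Proof.
  destruct rat_hyperbolic_sides as (RA & RB & RC & Rsa & Rsb & Rsc).
  destruct (sinh_sides_pos T) as (Ha & Hb & Hc).
  rewrite cos_area_eq. unfold angle_sum_cos, gram. rewrite <- !sinh_sq.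
  rat_closure. pos_product.
Qed.

(* Every sine is a nonzero rational multiple of Delta2. *)
Lemma rat_sines_iff_Delta2 :
  is_rat (Delta2 T) <->
  is_rat (sin (ht_alpha T)) /\ is_rat (sin (ht_beta T)) /\ is_rat (sin (ht_gamma T)).
Proof.
  destruct rat_hyperbolic_sides as (_ & _ & _ & Rsa & Rsb & Rsc).
  destruct (sinh_sides_pos T) as (Ha & Hb & Hc).
  destruct (sin_angles_eq T) as (-> & -> & ->).
  rewrite !rat_div_iff; try (apply rat_mult; assumption); try pos_product.
  tauto.
Qed.

Lemma rat_sin_area_iff_Delta2 : is_rat (sin (ht_area T)) <-> is_rat (Delta2 T).
Proof.
  rewrite sin_area_eq. apply rat_scale_iff; [exact rat_area_ratio |].
  apply Rgt_not_eq, area_ratio_pos.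
Qed.

End RationalTriangle.

Theorem mainTheorem7 (T : hyp_triangle) :
  is_rat (exp (ht_a T)) -> is_rat (exp (ht_b T)) -> is_rat (exp (ht_c T)) ->
  (is_rat (cos (ht_alpha T)) /\ is_rat (cos (ht_beta T)) /\
   is_rat (cos (ht_gamma T))) /\
  Delta2 T = sin (ht_beta T) * sinh (ht_a T) * sinh (ht_c T) /\
  Delta2 T = sin (ht_gamma T) * sinh (ht_a T) * sinh (ht_b T) /\
  (exists r : R, is_rat r /\ sin (ht_area T) = r * Delta2 T) /\
  (is_rat (Delta2 T) <->
     (is_rat (sin (ht_alpha T)) /\ is_rat (sin (ht_beta T)) /\
      is_rat (sin (ht_gamma T)))) /\
  ((is_rat (sin (ht_alpha T)) /\ is_rat (sin (ht_beta T)) /\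
    is_rat (sin (ht_gamma T))) <-> is_rat (sin (ht_area T))) /\
  (is_rat (sin (ht_area T)) -> hyp_heron T).
Proof.
  intros Ea Eb Ec.
  pose proof (rat_cosines T Ea Eb Ec) as Hcos.
  pose proof (rat_sines_iff_Delta2 T Ea Eb Ec) as Hsines.
  pose proof (rat_sin_area_iff_Delta2 T Ea Eb Ec) as Harea.
  split; [exact Hcos |].
  split; [apply Delta2_beta |]. split; [apply Delta2_gamma |].
  split.
  { exists (area_ratio (cosh (ht_a T)) (cosh (ht_b T)) (cosh (ht_c T))).
    split; [apply rat_area_ratio; assumption | apply sin_area_eq]. }
  split; [exact Hsines |]. split; [tauto |].
  intro Hsin.
  pose proof (rat_cos_area T Ea Eb Ec).
  unfold hyp_heron. tauto.
Qed.
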